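(* Each of the sets $\{1,2,3\}$, $\{1,2,3,4\}$, $\{1,2,3,4,5\}$, $\{1,2,3,4,6\}$, $\{1,2,3,4,5,6\}$ belongs to $\mathcal{I}_1$.
   Context: For a summable sequence $\mathbf{x}=(x_n)$ of positive reals, $\mathcal{A}(\mathbf{x})=\{\sum_{n\in A}x_n: A\subseteq\mathbb{N}\}$ is its achievement set and its cardinal function $f$ assigns to $x\in\mathcal{A}(\mathbf{x})$ the cardinality (a positive integer, $\omega$, or $\mathfrak{c}$) of $\{(\varepsilon_n)\in\{0,1\}^{\mathbb{N}}:\sum\varepsilon_nx_n=x\}$. $\mathcal{I}_1$ is the family of ranges of cardinal functions of such sequences whose achievement set is a single closed interval. *)

From Stdlib Require Import Reals List.
From Coquelicot Require Import Coquelicot.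
Open Scope R_scope.

Inductive cardinal := Fin (n : nat) | Omega | Continuum.

Definition subsum (x : nat -> R) (e : nat -> bool) : R :=
  Series (fun n => if e n then x n else 0).

Definition achievement (x : nat -> R) (t : R) : Prop :=
  exists e : nat -> bool, subsum x e = t.

Definition fiber (x : nat -> R) (t : R) (e : nat -> bool) : Prop :=
  subsum x e = t.

Definition card_is (F : (nat -> bool) -> Prop) (k : cardinal) : Prop :=
  match k with
  | Fin n => exists l : list (nat -> bool),
      length l = n /\ NoDup l /\ forall e, F e <-> In e l
  | Omega => exists f : nat -> (nat -> bool),
      (forall m n, f m = f n -> m = n) /\ forall e, F e <-> exists n, f n = e
  | Continuum => exists g : (nat -> bool) -> (nat -> bool),
      (forall s s', g s = g s' -> s = s') /\ forall e, F e <-> exists s, g s = e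
  end.

Definition in_cardinal_range (x : nat -> R) (k : cardinal) : Prop :=
  exists t, achievement x t /\ card_is (fiber x t) k.

Definition in_I1 (S : cardinal -> Prop) : Prop :=
  exists x : nat -> R,
    (forall n, 0 < x n) /\ ex_series x /\
    (exists a b, a <= b /\ forall t, achievement x t <-> a <= t <= b) /\
    (forall k, in_cardinal_range x k <-> S k).

(* Each set is realised by a finite prefix followed by the binary tail 1/2, 1/4, 1/8, ...
   The tail alone achieves exactly [0,1], each point once, except the dyadic points of (0,1),
   which have exactly two expansions (one ending in zeros, one in ones).  Hence t is achieved
   by the whole sequence in exactly sum_{A ⊆ prefix} c(t - sum A) ways, where c(u) ∈ {0,1,2}
   is the tail count of u; in particular every cardinality is finite.  For the prefixes (1/3),
   (1/2), (1/2,2/3), (1/2,1/2) and (1/2,1/3) a finite case analysis on the positions of the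
   points t - sum A, and on which of them are dyadic, gives an interval as achievement set and
   exactly the five required ranges. *)

From Stdlib Require Import Reals List Lra Lia ZArith Znumtheory Zpow_facts.
From Stdlib Require Import Classical ClassicalEpsilon FunctionalExtensionality.
From Coquelicot Require Import Coquelicot.
Open Scope R_scope.
Set Bullet Behavior "Strict Subproofs".

Definition half_pow (n : nat) : R := (/2) ^ S n.

Lemma half_pow_pos n : 0 < half_pow n.
Proof. apply pow_lt; lra. Qed.

Lemma is_series_half_pow : is_series half_pow 1.
Proof.
  pose proof (is_series_geom (/2) ltac:(rewrite Rabs_pos_eq; lra)) as Hgeom.
  apply (is_series_scal_l (/2)) in Hgeom.
  replace 1 with (scal (/2) (/ (1 - /2))) by (unfold scal; simpl; unfold mult; simpl; field).
  exact Hgeom.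
Qed.

Lemma ex_series_half_pow : ex_series half_pow.
Proof. exists 1; exact is_series_half_pow. Qed.

Lemma ex_series_select (x : nat -> R) (e : nat -> bool) :
  (forall n, 0 <= x n) -> ex_series x -> ex_series (fun n => if e n then x n else 0).
Proof.
  intros Hx_nonneg Hx.
  apply (@ex_series_le R_AbsRing R_CompleteNormedModule _ x); [|exact Hx].
  intro n; change (norm ?a) with (Rabs a).
  destruct (e n); [rewrite Rabs_pos_eq|rewrite Rabs_R0]; auto; lra.
Qed.

Definition binval (e : nat -> bool) : R := subsum half_pow e.

Definition shift (e : nat -> bool) : nat -> bool := fun n => e (S n).

Definition bcons (b : bool) (e : nat -> bool) : nat -> bool :=
  fun n => match n with O => b | S m => e m end.

Lemma bcons_inj (b : bool) (e e' : nat -> bool) : bcons b e = bcons b e' -> e = e'.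
Proof. intro H; extensionality n; exact (f_equal (fun f => f (S n)) H). Qed.

Lemma ex_series_binval_terms (e : nat -> bool) :
  ex_series (fun n => if e n then half_pow n else 0).
Proof.
  apply ex_series_select; [intro n; left; apply half_pow_pos | exact ex_series_half_pow].
Qed.

Lemma binval_bounds (e : nat -> bool) : 0 <= binval e <= 1.
Proof.
  split.
  - rewrite <- (Rmult_0_l (Series half_pow)), <- Series_scal_l.
    apply Series_le; [|exact (ex_series_binval_terms e)].
    intro n; pose proof (half_pow_pos n); destruct (e n); lra.
  - rewrite <- (is_series_unique _ _ is_series_half_pow).
    apply Series_le; [|exact ex_series_half_pow].
    intro n; pose proof (half_pow_pos n); destruct (e n); lra.
Qed.

Lemma binval_cons (e : nat -> bool) :
  binval e = (if e O then /2 else 0) + /2 * binval (shift e).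
Proof.
  unfold binval, subsum; rewrite Series_incr_1 by exact (ex_series_binval_terms e).
  f_equal; [destruct (e O); unfold half_pow; simpl; ring|].
  rewrite <- Series_scal_l; apply Series_ext; intro n.
  unfold shift, half_pow; destruct (e (S n)); simpl; ring.
Qed.

Lemma binval_bcons (b : bool) (e : nat -> bool) :
  binval (bcons b e) = (if b then /2 else 0) + /2 * binval e.
Proof. exact (binval_cons (bcons b e)). Qed.

Lemma binval_const (b : bool) : binval (fun _ => b) = if b then 1 else 0.
Proof.
  unfold binval, subsum; destruct b.
  - exact (is_series_unique _ _ is_series_half_pow).
  - rewrite (Series_ext _ (fun n => 0 * half_pow n)) by (intro; ring).
    rewrite Series_scal_l; ring.
Qed.

Lemma binval_extreme (b : bool) (e : nat -> bool) (k : nat) :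
  binval e = (if b then 1 else 0) -> e k = b.
Proof.
  revert e; induction k as [|k IH]; intros e He;
    rewrite binval_cons in He; pose proof (binval_bounds (shift e)).
  - destruct b, (e O); auto; lra.
  - apply (IH (shift e)); destruct b, (e O); lra.
Qed.

Fixpoint greedy_rem (u : R) (n : nat) : R :=
  match n with
  | O => u
  | S m => if Rle_dec 1 (2 * greedy_rem u m) then 2 * greedy_rem u m - 1
           else 2 * greedy_rem u m
  end.

Definition greedy_digit (u : R) (n : nat) : bool :=
  if Rle_dec 1 (2 * greedy_rem u n) then true else false.

Lemma greedy_rem_bounds u n : 0 <= u <= 1 -> 0 <= greedy_rem u n <= 1.
Proof. intro Hu; induction n; simpl; [exact Hu | destruct Rle_dec; lra]. Qed.

Lemma sum_greedy_digits u n :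
  sum_n (fun i => if greedy_digit u i then half_pow i else 0) n
  = u - greedy_rem u (S n) * (/2) ^ S n.
Proof.
  induction n as [|n IH].
  - rewrite sum_O; unfold greedy_digit, half_pow; simpl; destruct Rle_dec; field.
  - rewrite sum_Sn, IH; unfold plus, greedy_digit, half_pow; simpl.
    repeat destruct Rle_dec; field.
Qed.

Lemma binval_surj u : 0 <= u <= 1 -> exists e, binval e = u.
Proof.
  intro Hu; exists (greedy_digit u); unfold binval, subsum; apply is_series_unique.
  change (is_lim_seq (sum_n (fun i => if greedy_digit u i then half_pow i else 0)) u).
  apply (is_lim_seq_le_le (fun n => u - (/2) ^ n) _ (fun _ => u)).
  - intro n; rewrite sum_greedy_digits.
    pose proof (greedy_rem_bounds u (S n) Hu).
    pose proof (pow_lt (/2) n ltac:(lra)).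
    set (r := greedy_rem u (S n)) in *; simpl; split; nra.
  - replace (Finite u) with (Finite (u - 0)) by (f_equal; ring).
    apply is_lim_seq_minus'; [apply is_lim_seq_const|].
    apply is_lim_seq_geom; rewrite Rabs_pos_eq; lra.
  - apply is_lim_seq_const.
Qed.

Definition dyadic (u : R) : Prop := exists (k : Z) (n : nat), u * 2 ^ n = IZR k.

Lemma dyadic_sub u v : dyadic u -> dyadic v -> dyadic (u - v).
Proof.
  intros [k1 [n1 H1]] [k2 [n2 H2]].
  exists (k1 * 2 ^ Z.of_nat n2 - k2 * 2 ^ Z.of_nat n1)%Z, (n1 + n2)%nat.
  rewrite minus_IZR, !mult_IZR, <- !pow_IZR, pow_add, <- H1, <- H2; ring.
Qed.

Lemma not_dyadic_sub u v : dyadic u -> ~ dyadic v -> ~ dyadic (u - v).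
Proof.
  intros Hu Hv Huv; apply Hv; replace v with (u - (u - v)) by ring.
  exact (dyadic_sub _ _ Hu Huv).
Qed.

Lemma dyadic_bcons_value (b : bool) v :
  dyadic v -> dyadic ((if b then /2 else 0) + /2 * v).
Proof.
  intros [k [n Hk]].
  exists ((if b then 2 ^ Z.of_nat n else 0) + k)%Z, (S n).
  rewrite plus_IZR, <- Hk; destruct b; [rewrite <- pow_IZR|]; simpl; field.
Qed.

(* Every value met in the case analyses below is of the form [a/24]. *)
Lemma dyadic_24th_iff (a : Z) : dyadic (IZR a / 24) <-> (a mod 3 = 0)%Z.
Proof.
  split.
  - intros [k [n Hk]]; apply Zdivide_mod, (Gauss _ (2 ^ Z.of_nat n)).
    + exists (8 * k)%Z; apply eq_IZR.
      rewrite !mult_IZR, <- pow_IZR, <- Hk; field.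
    + apply rel_prime_Zpower_r; [lia | apply Zgcd_1_rel_prime; reflexivity].
  - intro Ha; apply Zmod_divide in Ha as [j ->]; [|lia].
    exists j, 3%nat; rewrite mult_IZR; simpl; field.
Qed.

Lemma dyadic_two_expansions u :
  0 < u < 1 -> dyadic u -> exists e1 e2, e1 <> e2 /\ binval e1 = u /\ binval e2 = u.
Proof.
  intros Hu [k [n Hk]]; revert u k Hu Hk; induction n as [|n IH]; intros u k Hu Hk.
  - simpl in Hk; rewrite Rmult_1_r in Hk; subst u.
    destruct Hu as [H0 H1]; apply lt_IZR in H0, H1; lia.
  - assert (Hk2 : (2 * u) * 2 ^ n = IZR k) by (rewrite <- Hk; simpl; ring).
    destruct (Rtotal_order (2 * u) 1) as [Hlt | [Heq | Hgt]].
    + destruct (IH (2 * u) k ltac:(lra) Hk2) as [e1 [e2 [Hne [H1 H2]]]].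
      exists (bcons false e1), (bcons false e2); split.
      * intro E; exact (Hne (bcons_inj _ _ _ E)).
      * rewrite !binval_bcons, H1, H2; split; field.
    + exists (bcons true (fun _ => false)), (bcons false (fun _ => true)); split.
      * intro E; discriminate (f_equal (fun f => f O) E).
      * rewrite !binval_bcons, !binval_const; split; lra.
    + assert (Hk3 : (2 * u - 1) * 2 ^ n = IZR (k - 2 ^ Z.of_nat n)).
      { rewrite minus_IZR, <- pow_IZR, <- Hk2; ring. }
      destruct (IH (2 * u - 1) _ ltac:(lra) Hk3) as [e1 [e2 [Hne [H1 H2]]]].
      exists (bcons true e1), (bcons true e2); split.
      * intro E; exact (Hne (bcons_inj _ _ _ E)).
      * rewrite !binval_bcons, H1, H2; split; field.
Qed.

Definition ends_with (b : bool) (e : nat -> bool) : Prop :=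
  exists N, forall j, (N <= j)%nat -> e j = b.

Lemma ends_with_unique (b c : bool) (e : nat -> bool) :
  ends_with b e -> ends_with c e -> b = c.
Proof.
  intros [N1 H1] [N2 H2].
  rewrite <- (H1 (N1 + N2)%nat), <- (H2 (N1 + N2)%nat) by lia; reflexivity.
Qed.

Lemma ends_with_shift (b : bool) (e : nat -> bool) : ends_with b (shift e) -> ends_with b e.
Proof. intros [N H]; exists (S N); intros [|j] Hj; [lia | apply H; lia]. Qed.

Lemma ends_with_of_extreme_tail (b : bool) (e : nat -> bool) :
  binval (shift e) = (if b then 1 else 0) -> ends_with b e.
Proof.
  intro H; exists 1%nat; intros [|j] Hj; [lia | exact (binval_extreme b (shift e) j H)].
Qed.

(* Two expansions with different first digits must be [0111...] and [1000...]. *)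
Lemma binval_head_differ (e e' : nat -> bool) :
  e O <> e' O -> binval e = binval e' ->
  0 < binval e < 1 /\ dyadic (binval e) /\
  exists b, ends_with b e /\ ends_with (negb b) e'.
Proof.
  intros Hd Hs; pose proof (binval_cons e); pose proof (binval_cons e').
  pose proof (binval_bounds (shift e)); pose proof (binval_bounds (shift e')).
  assert (Hhalf : binval e = /2) by (destruct (e O), (e' O); try congruence; lra).
  rewrite Hhalf; repeat split; [lra | lra | exists 1%Z, 1%nat; simpl; lra |].
  destruct (e O), (e' O); try congruence; [exists false | exists true];
    split; apply ends_with_of_extreme_tail; simpl; lra.
Qed.

Lemma binval_distinct_expansions (k : nat) : forall e e' : nat -> bool,
  e k <> e' k -> binval e = binval e' ->
  0 < binval e < 1 /\ dyadic (binval e) /\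
  exists b, ends_with b e /\ ends_with (negb b) e'.
Proof.
  induction k as [|k IH]; intros e e' Hd Hs; [exact (binval_head_differ e e' Hd Hs)|].
  destruct (Bool.bool_dec (e O) (e' O)) as [Heq | Hne].
  - assert (Hs' : binval (shift e) = binval (shift e')).
    { rewrite (binval_cons e), (binval_cons e'), Heq in Hs; lra. }
    destruct (IH (shift e) (shift e') Hd Hs') as [Hint [Hdy [b [Hb Hb']]]].
    rewrite binval_cons; repeat split.
    + destruct (e O); lra.
    + destruct (e O); lra.
    + apply dyadic_bcons_value, Hdy.
    + exists b; split; apply ends_with_shift; assumption.
  - exact (binval_head_differ e e' Hne Hs).
Qed.

Lemma exists_diff_index (e e' : nat -> bool) : e <> e' -> exists k, e k <> e' k.
Proof.
  intro Hne; apply NNPP; intro Hall; apply Hne; extensionality k.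
  apply NNPP; intro Hk; exact (Hall (ex_intro _ k Hk)).
Qed.

Lemma binval_at_most_two (e1 e2 e3 : nat -> bool) :
  e1 <> e2 -> e1 <> e3 -> e2 <> e3 ->
  binval e1 = binval e2 -> binval e1 = binval e3 -> False.
Proof.
  intros N12 N13 N23 H12 H13.
  destruct (exists_diff_index _ _ N12) as [k12 D12], (exists_diff_index _ _ N13) as [k13 D13],
    (exists_diff_index _ _ N23) as [k23 D23].
  destruct (binval_distinct_expansions k12 _ _ D12 H12) as [_ [_ [b12 [A1 A2]]]].
  destruct (binval_distinct_expansions k13 _ _ D13 H13) as [_ [_ [b13 [B1 B3]]]].
  destruct (binval_distinct_expansions k23 _ _ D23 (eq_trans (eq_sym H12) H13))
    as [_ [_ [b23 [C2 C3]]]].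
  pose proof (ends_with_unique _ _ _ A1 B1); pose proof (ends_with_unique _ _ _ A2 C2);
    pose proof (ends_with_unique _ _ _ B3 C3).
  destruct b12, b13, b23; discriminate.
Qed.

Definition tail_count (u : R) : nat :=
  if excluded_middle_informative (0 < u < 1 /\ dyadic u) then 2
  else if excluded_middle_informative (0 <= u <= 1) then 1 else 0.

Lemma tail_count_cases u :
  (tail_count u = 0%nat /\ (u < 0 \/ 1 < u)) \/
  (tail_count u = 1%nat /\ 0 <= u <= 1 /\ (u = 0 \/ u = 1 \/ ~ dyadic u)) \/
  (tail_count u = 2%nat /\ 0 < u < 1 /\ dyadic u).
Proof.
  unfold tail_count.
  destruct excluded_middle_informative as [[Hu Hd] | Hnd]; [right; right; auto|].
  destruct excluded_middle_informative as [Hu | Hout]; [right; left | left]; split; auto.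
  - split; [exact Hu|].
    destruct (Req_dec u 0); [left | destruct (Req_dec u 1); [right; left | right; right]]; auto.
    intro Hd; apply Hnd; split; [lra | exact Hd].
  - lra.
Qed.

Lemma binval_fiber u : exists l : list (nat -> bool),
  length l = tail_count u /\ NoDup l /\ forall e, binval e = u <-> In e l.
Proof.
  destruct (tail_count_cases u) as [[-> Hout] | [[-> [Hu Hnd]] | [-> [Hu Hd]]]].
  - exists nil; repeat split; [constructor | | intros []].
    intro He; pose proof (binval_bounds e); lra.
  - destruct (binval_surj u Hu) as [e0 He0].
    exists (e0 :: nil); repeat split; [constructor; [intros [] | constructor] | | ].
    + intro He; left; apply NNPP; intro Hne.
      destruct (exists_diff_index _ _ Hne) as [k Hk].
      destruct (binval_distinct_expansions k _ _ Hk (eq_trans He0 (eq_sym He)))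
        as [Hint [Hdy _]].
      rewrite He0 in Hint, Hdy; destruct Hnd as [-> | [-> | Hnd]]; lra || contradiction.
    + intros [<- | []]; exact He0.
  - destruct (dyadic_two_expansions u Hu Hd) as [e1 [e2 [Hne [H1 H2]]]].
    exists (e1 :: e2 :: nil); repeat split.
    + constructor; [intros [E | []]; exact (Hne (eq_sym E)) |].
      constructor; [intros [] | constructor].
    + intro He; simpl; apply NNPP; intros Hnot.
      apply (binval_at_most_two e1 e2 e); try congruence; intros <-; tauto.
    + intros [<- | [<- | []]]; assumption.
Qed.

Fixpoint prefixed (p : list R) : nat -> R :=
  match p with
  | nil => half_pow
  | a :: q => fun n => match n with O => a | S m => prefixed q m end
  end.

(* [t] is represented either without or with the first term of the prefix. *)
Fixpoint count (p : list R) (t : R) : nat :=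
  match p with
  | nil => tail_count t
  | a :: q => (count q t + count q (t - a))%nat
  end.

Lemma prefixed_pos p : List.Forall (fun a => 0 < a) p -> forall n, 0 < prefixed p n.
Proof.
  induction p as [|a q IH]; intros Hp n; [apply half_pow_pos|].
  inversion Hp; subst; destruct n; simpl; auto.
Qed.

Lemma ex_series_prefixed p : ex_series (prefixed p).
Proof.
  induction p as [|a q IH]; [exact ex_series_half_pow|].
  exact (proj2 (ex_series_incr_1 (prefixed (a :: q))) IH).
Qed.

Lemma subsum_prefixed_cons a q (e : nat -> bool) :
  List.Forall (fun a => 0 < a) (a :: q) ->
  subsum (prefixed (a :: q)) e = (if e O then a else 0) + subsum (prefixed q) (shift e).
Proof.
  intro Hp; unfold subsum; rewrite Series_incr_1; [reflexivity|].
  apply ex_series_select; [intro n; left; apply prefixed_pos, Hp | apply ex_series_prefixed].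
Qed.

Lemma in_map_bcons (b : bool) l (e : nat -> bool) :
  In e (map (bcons b) l) <-> e O = b /\ In (shift e) l.
Proof.
  rewrite in_map_iff; split.
  - intros [e' [<- He']]; split; [reflexivity | exact He'].
  - intros [H0 Hin]; exists (shift e); split; [|exact Hin].
    extensionality n; destruct n; simpl; auto.
Qed.

Lemma count_fiber p : List.Forall (fun a => 0 < a) p -> forall t,
  exists l : list (nat -> bool), length l = count p t /\ NoDup l /\
    forall e, subsum (prefixed p) e = t <-> In e l.
Proof.
  induction p as [|a q IH]; intros Hp t; [exact (binval_fiber t)|].
  assert (Hq : List.Forall (fun a => 0 < a) q) by (inversion Hp; assumption).
  destruct (IH Hq t) as [l0 [L0 [N0 M0]]], (IH Hq (t - a)) as [l1 [L1 [N1 M1]]].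
  exists (map (bcons false) l0 ++ map (bcons true) l1); repeat split.
  - rewrite length_app, !length_map; simpl; lia.
  - apply NoDup_app.
    + apply NoDup_map_NoDup_ForallPairs; [intros ? ? _ _; apply bcons_inj | exact N0].
    + apply NoDup_map_NoDup_ForallPairs; [intros ? ? _ _; apply bcons_inj | exact N1].
    + intros e H0 H1; apply in_map_bcons in H0 as [E0 _], H1 as [E1 _]; congruence.
  - intro He; rewrite subsum_prefixed_cons in He by exact Hp; apply in_or_app.
    rewrite !in_map_bcons, <- M0, <- M1; destruct (e O); [right | left]; split; auto; lra.
  - intro He; rewrite subsum_prefixed_cons by exact Hp; apply in_app_or in He.
    rewrite !in_map_bcons, <- M0, <- M1 in He.
    destruct He as [[-> He] | [-> He]]; lra.
Qed.

Lemma no_injection_nat_list {A : Type} (f : nat -> A) (l : list A) :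
  (forall m n, f m = f n -> m = n) -> (forall n, In (f n) l) -> False.
Proof.
  intros Hinj Hin.
  assert (H : (length (map f (seq 0 (S (length l)))) <= length l)%nat).
  { apply NoDup_incl_length.
    - apply NoDup_map_NoDup_ForallPairs; [intros m n _ _; apply Hinj | apply seq_NoDup].
    - intros x Hx; apply in_map_iff in Hx as [n [<- _]]; apply Hin. }
  rewrite length_map, length_seq in H; lia.
Qed.

Lemma card_is_list (F : (nat -> bool) -> Prop) (l : list (nat -> bool)) (k : cardinal) :
  NoDup l -> (forall e, F e <-> In e l) -> card_is F k -> k = Fin (length l).
Proof.
  intros Hl HF; destruct k as [n | |]; simpl.
  - intros [l' [<- [Hl' HF']]]; f_equal.
    apply Nat.le_antisymm; apply NoDup_incl_length; try assumption; intros e He;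
      [apply HF, HF' | apply HF', HF]; exact He.
  - intros [f [Hinj Hf]]; exfalso.
    apply (no_injection_nat_list f l Hinj); intro n; apply HF, Hf; exists n; reflexivity.
  - intros [h [Hinj Hh]]; exfalso.
    apply (no_injection_nat_list (fun n => h (fun m => Nat.eqb m n)) l).
    + intros m n E; apply Hinj in E.
      pose proof (f_equal (fun s => s m) E) as Em; simpl in Em.
      rewrite Nat.eqb_refl in Em; symmetry in Em; apply Nat.eqb_eq, Em.
    + intro n; apply HF, Hh; eexists; reflexivity.
Qed.

Section Prefixed.

Variable p : list R.
Hypothesis p_pos : List.Forall (fun a => 0 < a) p.

Lemma achievement_prefixed t : achievement (prefixed p) t <-> (0 < count p t)%nat.
Proof.
  destruct (count_fiber p p_pos t) as [l [<- [_ Hl]]]; unfold achievement, fiber.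
  destruct l as [|e l]; simpl; split.
  - intros [e He]; apply Hl in He; contradiction.
  - lia.
  - lia.
  - intros _; exists e; apply Hl; left; reflexivity.
Qed.

Lemma in_cardinal_range_prefixed k :
  in_cardinal_range (prefixed p) k <-> exists t, (0 < count p t)%nat /\ k = Fin (count p t).
Proof.
  split; intros [t [Ht Hk]]; exists t; rewrite achievement_prefixed in *; split; try exact Ht;
    destruct (count_fiber p p_pos t) as [l [Hlen [Hnd Hl]]]; rewrite <- Hlen in *.
  - exact (card_is_list _ l k Hnd Hl Hk).
  - rewrite Hk; exists l; auto.
Qed.

Lemma in_I1_of_prefix (b : R) (S : cardinal -> Prop) : 0 <= b ->
  (forall t, (0 < count p t)%nat <-> 0 <= t <= b) ->
  (forall k, S k <-> exists t, (0 < count p t)%nat /\ k = Fin (count p t)) ->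
  in_I1 S.
Proof.
  intros Hb Hsupp HS; exists (prefixed p); split; [|split; [|split]].
  - apply prefixed_pos, p_pos.
  - apply ex_series_prefixed.
  - exists 0, b; split; [exact Hb|]; intro t; rewrite achievement_prefixed; apply Hsupp.
  - intro k; rewrite in_cardinal_range_prefixed, HS; tauto.
Qed.

End Prefixed.

(* [frac_of u] reads a closed rational expression [u] as a numerator/denominator pair; any other
   subterm counts as [0], which is harmless when such atoms cancel in [u]. *)
Ltac frac_of u :=
  lazymatch u with
  | IZR ?z => constr:((z, 1%Z))
  | ?x + ?y => let p := frac_of x in let q := frac_of y in
      constr:((fst p * snd q + fst q * snd p, snd p * snd q)%Z)
  | ?x - ?y => let p := frac_of x in let q := frac_of y in
      constr:((fst p * snd q - fst q * snd p, snd p * snd q)%Z)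
  | - ?x => let p := frac_of x in constr:((- fst p, snd p)%Z)
  | ?x / ?y => let p := frac_of x in let q := frac_of y in
      constr:((fst p * snd q, snd p * fst q)%Z)
  | _ => constr:((0, 1)%Z)
  end.

Ltac refute_dyadic H u :=
  let p := frac_of u in
  let a := eval vm_compute in (fst p * 24 / snd p)%Z in
  lazymatch eval vm_compute in (a mod 3)%Z with 0%Z => fail | _ => idtac end;
  replace u with (IZR a / 24) in H by lra;
  apply dyadic_24th_iff in H; discriminate H.

Ltac refute_not_dyadic H u :=
  let p := frac_of u in
  let a := eval vm_compute in (fst p * 24 / snd p)%Z in
  lazymatch eval vm_compute in (a mod 3)%Z with 0%Z => idtac | _ => fail end;
  apply H; replace u with (IZR a / 24) by lra; apply dyadic_24th_iff; reflexivity.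

(* Two shifted points [t - s] and [t - s'] conflict through their constant difference [s' - s]. *)
Ltac dyadic_contra :=
  match goal with
  | H : dyadic ?u |- _ => refute_dyadic H u
  | H : ~ dyadic ?u |- _ => refute_not_dyadic H u
  | H1 : dyadic ?u, H2 : dyadic ?v |- _ =>
      let H := fresh in pose proof (dyadic_sub u v H1 H2) as H; refute_dyadic H (u - v)
  | H1 : dyadic ?u, H2 : ~ dyadic ?v |- _ =>
      let H := fresh in pose proof (not_dyadic_sub u v H1 H2) as H; refute_not_dyadic H (u - v)
  end.

(* Pruning inconsistent branches right away keeps the case tree small. *)
Ltac split_tail_count u :=
  let E := fresh in
  destruct (tail_count_cases u) as [[E ?] | [[E [? ?]] | [E [? ?]]]]; rewrite E in *; clear E;
  repeat match goal with H : _ \/ _ |- _ => destruct H end;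
  try (exfalso; lra).

Ltac count_cases :=
  cbn [count] in *;
  repeat match goal with
  | |- context [tail_count ?u] => split_tail_count u
  | _ : context [tail_count ?u] |- _ => split_tail_count u
  end.

Ltac solve_disj := first [reflexivity | left; reflexivity | right; solve_disj].

Ltac count_close :=
  solve [lia | lra | solve_disj | exfalso; first [lia | dyadic_contra]].

Ltac count_solve := count_cases; count_close.

Ltac count_value := split; [|f_equal]; count_solve.

Ltac apply_prefix prefix bound :=
  apply (in_I1_of_prefix prefix) with (b := bound);
    [repeat constructor; lra | lra | intro t; split; intro; count_solve | intro k; split].

Lemma in_I1_upto3 : in_I1 (fun k => k = Fin 1 \/ k = Fin 2 \/ k = Fin 3).
Proof.
  apply_prefix (1/3 :: nil) (4/3).
  - intros [-> | [-> | ->]]; [exists 0 | exists 1 | exists (1/2)]; count_value.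
  - intros [t [Ht ->]]; count_solve.
Qed.

Lemma in_I1_upto4 : in_I1 (fun k => k = Fin 1 \/ k = Fin 2 \/ k = Fin 3 \/ k = Fin 4).
Proof.
  apply_prefix (1/2 :: nil) (3/2).
  - intros [-> | [-> | [-> | ->]]]; [exists 0 | exists (2/3) | exists 1 | exists (3/4)];
      count_value.
  - intros [t [Ht ->]]; count_solve.
Qed.

Lemma in_I1_upto5 :
  in_I1 (fun k => k = Fin 1 \/ k = Fin 2 \/ k = Fin 3 \/ k = Fin 4 \/ k = Fin 5).
Proof.
  apply_prefix (1/2 :: 2/3 :: nil) (13/6).
  - intros [-> | [-> | [-> | [-> | ->]]]];
      [exists 0 | exists (1/4) | exists (1/2) | exists 1 | exists (3/4)]; count_value.
  - intros [t [Ht ->]]; count_solve.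
Qed.

Lemma in_I1_upto4_and6 :
  in_I1 (fun k => k = Fin 1 \/ k = Fin 2 \/ k = Fin 3 \/ k = Fin 4 \/ k = Fin 6).
Proof.
  apply_prefix (1/2 :: 1/2 :: nil) 2.
  - intros [-> | [-> | [-> | [-> | ->]]]];
      [exists 0 | exists (1/4) | exists (2/3) | exists (1/2) | exists 1]; count_value.
  - intros [t [Ht ->]]; count_solve.
Qed.

Lemma in_I1_upto6 :
  in_I1 (fun k => k = Fin 1 \/ k = Fin 2 \/ k = Fin 3 \/ k = Fin 4 \/ k = Fin 5 \/ k = Fin 6).
Proof.
  apply_prefix (1/2 :: 1/3 :: nil) (11/6).
  - intros [-> | [-> | [-> | [-> | [-> | ->]]]]];
      [exists 0 | exists (3/2) | exists (2/3) | exists (1/2) | exists 1 | exists (7/8)];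
      count_value.
  - intros [t [Ht ->]]; count_solve.
Qed.

Theorem proposition7p2 :
  in_I1 (fun k => k = Fin 1 \/ k = Fin 2 \/ k = Fin 3) /\
  in_I1 (fun k => k = Fin 1 \/ k = Fin 2 \/ k = Fin 3 \/ k = Fin 4) /\
  in_I1 (fun k => k = Fin 1 \/ k = Fin 2 \/ k = Fin 3 \/ k = Fin 4 \/ k = Fin 5) /\
  in_I1 (fun k => k = Fin 1 \/ k = Fin 2 \/ k = Fin 3 \/ k = Fin 4 \/ k = Fin 6) /\
  in_I1 (fun k => k = Fin 1 \/ k = Fin 2 \/ k = Fin 3 \/ k = Fin 4 \/ k = Fin 5 \/ k = Fin 6).
Proof.
  exact (conj in_I1_upto3
           (conj in_I1_upto4 (conj in_I1_upto5 (conj in_I1_upto4_and6 in_I1_upto6)))).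
Qed.
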